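(* Let $X$ be an algebraic variety. The assignment $U\mapsto\mathcal{T}(U)$ to every Zariski open $U\subset X$, together with the restriction of functions $\mathcal{T}(V)\to\mathcal{T}(U)$ for Zariski open $U\subset V$, is a sheaf on $X$ (in the Zariski topology).
   Context: An affine algebraic variety is a topological space with a sheaf of real-valued functions isomorphic as a ringed space (via a ''closed embedding'' $i$) to an algebraic set $Y\subset\mathbb{R}^n$ (common zero locus of real polynomials) with its Zariski topology and sheaf of regular functions. An algebraic variety is a topological space with a sheaf of real-valued functions admitting a finite open cover by affine algebraic varieties; Zariski open subsets of (affine) algebraic varieties are (affine) algebraic varieties. A tempered function on $\mathbb{R}^n$ is a smooth function all of whose partial derivatives are bounded by $C(1+|x|^2)^N$ for some $C,N$. For affine $X$, $\mathcal{T}(X)$ is the space of $f:X\to\mathbb{R}$ such that $f\circ i^{-1}$ is the restriction to $i(X)$ of a tempered function on $\mathbb{R}^n$ (independent of $i$). For a general algebraic variety $X$, $\mathcal{T}(X)$ is the set of $t:X\to\mathbb{R}$ such that $t|_{X_i}\in\mathcal{T}(X_i)$ for every member $X_i$ of some (equivalently every) finite Zariski open cover of $X$ by affine algebraic varieties. *)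

From mathcomp Require Import all_boot all_algebra.
From mathcomp Require Import all_classical all_reals all_analysis.
Set Implicit Arguments. Unset Strict Implicit. Unset Printing Implicit Defensive.
Import GRing.Theory Num.Theory.
Local Open Scope classical_set_scope.
Local Open Scope ring_scope.

Section Defs.
Variable R : realType.

Definition enorm (n : nat) (x : 'rV[R]_n) : R :=
  Num.sqrt (\sum_(i < n) x ord0 i ^+ 2).

Definition evec (n : nat) (i : 'I_n) : 'rV[R]_n := delta_mx ord0 i.

Inductive polyfun (n : nat) : ('rV[R]_n -> R) -> Prop :=
  | polyfun_cst (c : R) : polyfun (fun _ => c)
  | polyfun_coord (i : 'I_n) : polyfun (fun x => x ord0 i)
  | polyfun_add p q : polyfun p -> polyfun q -> polyfun (fun x => p x + q x)
  | polyfun_mul p q : polyfun p -> polyfun q -> polyfun (fun x => p x * q x).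

Definition zero_locus (n : nat) (S : set ('rV[R]_n -> R)) : set 'rV[R]_n :=
  [set x | forall p, S p -> p x = 0].

Definition algebraic_set (n : nat) (Y : set 'rV[R]_n) : Prop :=
  exists S : set ('rV[R]_n -> R), (forall p, S p -> polyfun p) /\ Y = zero_locus S.

Definition zopen_in (n : nat) (Y V : set 'rV[R]_n) : Prop :=
  exists S : set ('rV[R]_n -> R), (forall p, S p -> polyfun p) /\
    V = Y `&` ~` zero_locus S.

Definition regular_on (n : nat) (Y V : set 'rV[R]_n) (g : 'rV[R]_n -> R) : Prop :=
  forall y, V y -> exists W, [/\ zopen_in Y W, W y & W `<=` V] /\
    exists p q, [/\ polyfun p, polyfun q &
      forall z, W z -> q z != 0 /\ g z = p z / q z].

Definition partial (n : nat) (i : 'I_n) (F : 'rV[R]_n -> R) : 'rV[R]_n -> R :=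
  fun x => derive1 (fun h : R => F (x + h *: evec i)) 0.

Definition iter_partial (n : nat) (s : seq 'I_n) (F : 'rV[R]_n -> R) :
  'rV[R]_n -> R := foldr (@partial n) F s.

Definition continuous_Rn (n : nat) (F : 'rV[R]_n -> R) : Prop :=
  forall x (e : R), 0 < e -> exists d : R, 0 < d /\
    forall y, enorm (y - x) < d -> `|F y - F x| < e.

Definition smooth_Rn (n : nat) (F : 'rV[R]_n -> R) : Prop :=
  forall s : seq 'I_n,
    continuous_Rn (iter_partial s F) /\
    forall (i : 'I_n) x,
      derivable (fun h : R => iter_partial s F (x + h *: evec i)) 0 1.

Definition tempered_Rn (n : nat) (F : 'rV[R]_n -> R) : Prop :=
  smooth_Rn F /\
  forall s : seq 'I_n, exists (C : R) (N : nat), forall x,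
    `|iter_partial s F x| <= C * (1 + enorm x ^+ 2) ^+ N.

(* A space is a type X with a family of open sets [opens] and, for each open
   U, a set [O U] of functions; a function on U is represented by any
   f : X -> R, only its values on U being relevant. *)

Definition is_topology (X : Type) (opens : set (set X)) : Prop :=
  [/\ opens setT, opens set0,
      (forall U V, opens U -> opens V -> opens (U `&` V)) &
      (forall (J : Type) (U : J -> set X), (forall j, opens (U j)) ->
          opens (\bigcup_j U j))].

Definition is_sheaf_of_functions (X : Type) (opens : set (set X))
    (O : set X -> set (X -> R)) : Prop :=
  (forall U (f g : X -> R), opens U -> (forall x, U x -> f x = g x) ->
      O U f -> O U g) /\
  (* restriction + gluing (locality) *)
  (forall U (J : Type) (W : J -> set X), opens U -> (forall j, opens (W j)) ->
      \bigcup_j W j = U ->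
      forall f : X -> R, O U f <-> (forall j, O (W j) f)).

(* [phi] is an isomorphism of ringed spaces from the open subspace U of
   (X, opens, O) onto the algebraic set Y with its Zariski topology and its
   sheaf of regular functions. *)
Definition affine_chart (X : Type) (opens : set (set X)) (O : set X -> set (X -> R))
    (U : set X) (n : nat) (Y : set 'rV[R]_n) (phi : X -> 'rV[R]_n) : Prop :=
  [/\ algebraic_set Y,
      (forall x, U x -> Y (phi x)) /\
      (forall x y, U x -> U y -> phi x = phi y -> x = y),
      (forall y, Y y -> exists2 x, U x & phi x = y),
      (forall W, W `<=` U -> (opens W <-> zopen_in Y (phi @` W))) &
      (forall W, W `<=` U -> opens W -> forall f : X -> R,
          O W f <-> exists g : 'rV[R]_n -> R,
            regular_on Y (phi @` W) g /\ forall x, W x -> f x = g (phi x))].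

Definition affine_open (X : Type) (opens : set (set X)) (O : set X -> set (X -> R))
    (U : set X) : Prop :=
  opens U /\ exists n (Y : set 'rV[R]_n) (phi : X -> 'rV[R]_n),
    affine_chart opens O U Y phi.

Definition algebraic_variety (X : Type) (opens : set (set X))
    (O : set X -> set (X -> R)) : Prop :=
  [/\ is_topology opens, is_sheaf_of_functions opens O &
      exists (k : nat) (U : 'I_k -> set X),
        (forall i, affine_open opens O (U i)) /\ \bigcup_i U i = setT].

(* T(U) for an affine open U: t o i^{-1} is the restriction to i(U) of a
   tempered function on R^n, for an embedding i *)
Definition tempered_affine (X : Type) (opens : set (set X))
    (O : set X -> set (X -> R)) (U : set X) (t : X -> R) : Prop :=
  exists n (Y : set 'rV[R]_n) (phi : X -> 'rV[R]_n),
    affine_chart opens O U Y phi /\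
    exists F : 'rV[R]_n -> R, tempered_Rn F /\ forall x, U x -> t x = F (phi x).

(* T(V) for a Zariski open V of X (itself an algebraic variety with the
   induced structure): t restricted to each member of some finite cover of V
   by affine open subsets lies in T of that member *)
Definition tempered_on (X : Type) (opens : set (set X))
    (O : set X -> set (X -> R)) (V : set X) (t : X -> R) : Prop :=
  exists (k : nat) (U : 'I_k -> set X),
    [/\ (forall i, affine_open opens O (U i)), (forall i, U i `<=` V),
        \bigcup_i U i = V &
        (forall i, tempered_affine opens O (U i) t)].

End Defs.

(* Tempered functions pull back to tempered functions along the closed
   embedding [y |-> (y, 1 / q y)] of a principal open [q <> 0] of an affine
   variety, so sections of T restrict to principal opens.  By Hilbert's basis
   theorem every Zariski open subset of an affine variety is a finite union of
   principal opens, which gives the restriction maps.  For gluing, compatible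
   sections define a function that is tempered on an affine neighbourhood of
   each point; each affine member of a finite affine cover of X is
   quasi-compact (again by Noetherianity), so finitely many of these
   neighbourhoods suffice. *)

From mathcomp Require Import all_boot all_algebra.
From mathcomp Require Import all_classical all_reals all_analysis.
From mathcomp Require Import zify ring.
Set Implicit Arguments. Unset Strict Implicit. Unset Printing Implicit Defensive.
Import order.Order.TTheory GRing.Theory Num.Theory.
Local Open Scope classical_set_scope.
Local Open Scope ring_scope.

Section IdealGen.
Variable A : comNzRingType.
Implicit Types (S I : set A) (L : seq A).

Inductive ideal_gen S : set A :=
| ideal_gen0 : ideal_gen S 0
| ideal_genMD a s x : S s -> ideal_gen S x -> ideal_gen S (a * s + x).

Definition ideal_closed I :=
  [/\ I 0, forall x y, I x -> I y -> I (x + y) & forall a x, I x -> I (a * x)].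

Lemma ideal_closedB I x y : ideal_closed I -> I x -> I y -> I (x - y).
Proof. by case=> _ ID IM Ix Iy; rewrite -mulN1r; exact/ID/IM. Qed.

Lemma ideal_gen_closed S : ideal_closed (ideal_gen S).
Proof.
split; first exact: ideal_gen0.
  move=> x y; elim=> [|a s z Ss _ IH] Iy; first by rewrite add0r.
  by rewrite -addrA; apply: ideal_genMD => //; exact: IH.
move=> b x; elim=> [|a s z Ss _ IH]; first by rewrite mulr0; exact: ideal_gen0.
by rewrite mulrDr mulrA; exact: ideal_genMD.
Qed.

Lemma ideal_gen_min S I : ideal_closed I -> S `<=` I -> ideal_gen S `<=` I.
Proof. by case=> I0 ID IM SI x; elim=> // a s y /SI Is _ Iy; exact/ID/Iy/IM. Qed.

Lemma sub_ideal_gen S : S `<=` ideal_gen S.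
Proof. by move=> s Ss; have := ideal_genMD 1 Ss (ideal_gen0 S); rewrite mul1r addr0. Qed.

Lemma ideal_gen_sub S I : S `<=` ideal_gen I -> ideal_gen S `<=` ideal_gen I.
Proof. exact: ideal_gen_min (ideal_gen_closed I). Qed.

Lemma ideal_genS S I : S `<=` I -> ideal_gen S `<=` ideal_gen I.
Proof. by move=> SI; apply: ideal_gen_sub; exact: subset_trans SI (@sub_ideal_gen I). Qed.

Lemma ideal_gen_catl L L' : ideal_gen [set` L] `<=` ideal_gen [set` L ++ L'].
Proof. by apply: ideal_genS => x /= xL; rewrite mem_cat xL. Qed.

Lemma ideal_gen_catr L L' : ideal_gen [set` L'] `<=` ideal_gen [set` L ++ L'].
Proof. by apply: ideal_genS => x /= xL; rewrite mem_cat xL orbT. Qed.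

Lemma ideal_gen_finite S (F : seq A) : [set` F] `<=` ideal_gen S ->
  exists L, [set` L] `<=` S /\ [set` F] `<=` ideal_gen [set` L].
Proof.
have one x : ideal_gen S x -> exists L, [set` L] `<=` S /\ ideal_gen [set` L] x.
  elim=> [|a s y Ss _ [L [LS Ly]]]; first by exists [::]; split => //; exact: ideal_gen0.
  exists (s :: L); split; first by move=> z /=; rewrite inE => /predU1P [->|/LS].
  apply: ideal_genMD; first exact: mem_head.
  by apply: ideal_genS Ly => z /= zL; rewrite inE zL orbT.
elim: F => [|x F IH] FS; first by exists [::].
have [Lx [LxS xLx]] := one x (FS x (mem_head _ _)).
have [|L [LS FL]] := IH; first by move=> y /= yF; apply: FS; rewrite /= inE yF orbT.
exists (Lx ++ L); split; first by move=> z /=; rewrite mem_cat => /orP [/LxS|/LS].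
move=> y /=; rewrite inE => /predU1P [->|/FL]; first exact: ideal_gen_catl.
exact: ideal_gen_catr.
Qed.

Definition noetherian :=
  forall S, exists L, [set` L] `<=` S /\ S `<=` ideal_gen [set` L].

Lemma noetherian_image (T : eqType) (M : set T) (phi : T -> A) : noetherian ->
  exists F : seq T, [set` F] `<=` M /\ phi @` M `<=` ideal_gen [set` map phi F].
Proof.
move=> noethA; have [L [LM ML]] := noethA (phi @` M).
suff [F [FM LF]] : exists F : seq T, [set` F] `<=` M /\ [set` L] `<=` [set` map phi F].
  by exists F; split => //; apply: subset_trans ML _; exact: ideal_genS.
elim: L LM {ML} => [|l L IH] LM; first by exists [::].
have [t Mt <-] := LM l (mem_head _ _).
have [|F [FM LF]] := IH; first by move=> y /= yL; apply: LM; rewrite /= inE yL orbT.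
exists (t :: F); split; first by move=> y /=; rewrite inE => /predU1P [->|/FM].
move=> y /=; rewrite !inE => /predU1P [->|/LF /= ->]; [by rewrite eqxx | exact: orbT].
Qed.

End IdealGen.

Lemma noetherian_field (F : fieldType) : noetherian F.
Proof.
move=> S; have [[s [Ss s0]]|N] := pselect (exists s, S s /\ s != 0).
  exists [:: s]; split; first by move=> x /=; rewrite inE => /eqP ->.
  move=> x _; rewrite -[x](mulfVK s0) -[_ * s]addr0.
  by apply: ideal_genMD; [exact: mem_head | exact: ideal_gen0].
exists [::]; split => // x Sx; have [->|x0] := eqVneq x 0; first exact: ideal_gen0.
by case: N; exists x.
Qed.

Lemma seq_sub_bigcup_mono (T : eqType) (P : nat -> set T) (L : seq T) :
  {homo P : d d' / (d <= d')%N >-> d `<=` d'} -> [set` L] `<=` \bigcup_d P d ->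
  exists D, [set` L] `<=` P D.
Proof.
move=> Pmono; elim: L => [|x L IH] LP; first by exists 0%N.
have [|D LD] := IH; first by move=> y /= yL; apply: LP; rewrite /= inE yL orbT.
have [d _ Pdx] := LP x (mem_head _ _).
exists (maxn d D) => y /=; rewrite inE => /predU1P [->|/LD].
  exact: Pmono (leq_maxl d D) _ Pdx.
exact: Pmono (leq_maxr d D) _.
Qed.

Section HilbertBasis.
Variable A : comNzRingType.
Implicit Types I J : set {poly A}.

Definition lead_coef_ideal I d : set A :=
  (fun f => f`_d) @` [set f | I f /\ (size f <= d.+1)%N].

Lemma lead_coef_ideal_closed I d :
  ideal_closed I -> ideal_closed (lead_coef_ideal I d).
Proof.
case=> I0 ID IM; split.
- by exists 0; rewrite /= ?coef0 ?size_poly0.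
- move=> _ _ [f [If sf] <-] [g [Ig sg] <-]; exists (f + g); rewrite ?coefD //.
  by split; [exact: ID | rewrite (leq_trans (size_polyD _ _)) // geq_max sf sg].
- move=> a _ [f [If sf] <-]; exists (a%:P * f); rewrite ?coefCM //.
  split; first exact: IM.
  by apply/leq_sizeP => j hj; rewrite coefCM (leq_sizeP _ _ sf) ?mulr0.
Qed.

Lemma lead_coef_idealS I d :
  ideal_closed I -> lead_coef_ideal I d `<=` lead_coef_ideal I d.+1.
Proof.
case=> _ _ IM _ [f [If sf] <-]; exists ('X * f); last by rewrite coefXM.
split; first exact: IM.
by apply/leq_sizeP => -[|j] hj //; rewrite coefXM (leq_sizeP _ _ sf).
Qed.

Lemma lead_coef_ideal_mono I : ideal_closed I ->
  {homo lead_coef_ideal I : d d' / (d <= d')%N >-> d `<=` d'}.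
Proof.
move=> Icl d d' /subnK <-; elim: (d' - d)%N => // k IH.
by apply: subset_trans IH _; exact: lead_coef_idealS.
Qed.

Lemma lead_coef_ideal_subset I J d :
  I `<=` J -> lead_coef_ideal I d `<=` lead_coef_ideal J d.
Proof. by move=> IJ _ [f [If sf] <-]; exists f => //; split => //; exact: IJ. Qed.

(* Cancel the top coefficient of an element of [I] by an element of [J] and
   induct on the size. *)
Lemma lead_coef_ideal_sub I J : ideal_closed I -> ideal_closed J -> J `<=` I ->
  (forall d, lead_coef_ideal I d `<=` lead_coef_ideal J d) -> I `<=` J.
Proof.
move=> Icl Jcl JI IJ f If; have [J0 JD _] := Jcl.
elim: (size f) {-2}f (leqnn (size f)) If => [|m IH] {}f sf If.
  by move: sf; rewrite leqn0 size_poly_eq0 => /eqP ->.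
have [g [Jg sg] gf] := IJ m f`_m (ex_intro2 _ _ f (conj If sf) erefl).
rewrite -(subrK g f); apply: JD (Jg); apply: IH; last exact: ideal_closedB (JI _ Jg).
apply/leq_sizeP => j; rewrite leq_eqVlt => /predU1P [<-|mj].
  by rewrite coefB gf subrr.
by rewrite coefB (leq_sizeP _ _ sf) ?(leq_sizeP _ _ sg) ?subrr.
Qed.

Lemma lead_coef_ideal_stable I : noetherian A -> ideal_closed I ->
  exists D, forall d, lead_coef_ideal I d `<=` lead_coef_ideal I D.
Proof.
move=> noethA Icl; have [L [LI IL]] := noethA (\bigcup_d lead_coef_ideal I d).
have [D LD] := seq_sub_bigcup_mono (lead_coef_ideal_mono Icl) LI.
exists D => d c Ic; apply: (ideal_gen_min (lead_coef_ideal_closed D Icl) LD).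
by apply: IL; exists d.
Qed.

Lemma lead_coef_ideal_lift I d : noetherian A -> exists2 F : seq {poly A}, [set` F] `<=` I &
  lead_coef_ideal I d `<=` lead_coef_ideal (ideal_gen [set` F]) d.
Proof.
move=> noethA; pose M := [set f | I f /\ (size f <= d.+1)%N].
have [F [FM IF]] := noetherian_image M (fun f => f`_d) noethA.
exists F; first by move=> f /FM [].
apply: subset_trans IF _; apply: ideal_gen_min.
  exact/lead_coef_ideal_closed/ideal_gen_closed.
move=> _ /mapP [f Ff ->]; exists f => //.
by split; [exact: sub_ideal_gen | exact: (FM f Ff).2].
Qed.

Lemma lead_coef_ideal_lift_le I D : noetherian A ->
  exists2 F : seq {poly A}, [set` F] `<=` I & forall d, (d <= D)%N ->
    lead_coef_ideal I d `<=` lead_coef_ideal (ideal_gen [set` F]) d.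
Proof.
move=> noethA; elim: D => [|D [F FI IF]].
  have [F FI IF] := lead_coef_ideal_lift I 0 noethA.
  by exists F => // d; rewrite leqn0 => /eqP ->.
have [F' F'I IF'] := lead_coef_ideal_lift I D.+1 noethA.
exists (F ++ F'); first by move=> f /=; rewrite mem_cat => /orP [/FI|/F'I].
move=> d; rewrite leq_eqVlt => /predU1P [->|dD].
  by apply: subset_trans IF' _; apply/lead_coef_ideal_subset/ideal_gen_catr.
by apply: subset_trans (IF d dD) _; apply/lead_coef_ideal_subset/ideal_gen_catl.
Qed.

Theorem hilbert_basis : noetherian A -> noetherian {poly A}.
Proof.
move=> noethA S; set I := ideal_gen S; have Icl : ideal_closed I := ideal_gen_closed S.
have [D leD] := lead_coef_ideal_stable noethA Icl.
have [F FI IF] := lead_coef_ideal_lift_le I D noethA.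
have IFgen : I `<=` ideal_gen [set` F].
  apply: lead_coef_ideal_sub => //; [exact: ideal_gen_closed | exact: ideal_gen_min |].
  move=> d; have [dD|Dd] := leqP d D; first exact: IF.
  apply: subset_trans (leD d) _; apply: subset_trans (IF D (leqnn D)) _.
  exact/(lead_coef_ideal_mono (ideal_gen_closed _))/ltnW.
have [L [LS FL]] := ideal_gen_finite FI.
exists L; split => //; apply: subset_trans (@sub_ideal_gen _ S) _.
by apply: subset_trans IFgen _; exact: ideal_gen_sub.
Qed.

End HilbertBasis.

Section IteratedPoly.
Variable F : fieldType.

Fixpoint iter_poly (n : nat) : comNzRingType :=
  if n is n'.+1 then ({poly iter_poly n'} : comNzRingType) else (F : comNzRingType).

Lemma noetherian_iter_poly n : noetherian (iter_poly n).
Proof. by elim: n => [|n IH]; [exact: noetherian_field | exact: hilbert_basis]. Qed.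

Fixpoint iter_polyC (n : nat) (c : F) : iter_poly n :=
  if n is n'.+1 then (iter_polyC n' c)%:P else c.

(* The variable [i] is the one adjoined at step [i.+1]; for [i >= n],
   [iter_polyX n i] is [0]. *)
Fixpoint iter_polyX (n : nat) (i : nat) : iter_poly n :=
  if n is n'.+1 then (if i == n' then 'X else (iter_polyX n' i)%:P) else 0.

Variable v : nat -> F.

Fixpoint iter_horner (n : nat) : {rmorphism iter_poly n -> F} :=
  match n return {rmorphism iter_poly n -> F} with
  | 0 => GRing.RMorphism.clone _ _ (@idfun F) _
  | n'.+1 => GRing.RMorphism.clone _ _
      (horner_morph (fun a : iter_poly n' => mulrC (v n') (iter_horner n' a))) _
  end.

Lemma iter_hornerC n c : iter_horner n (iter_polyC n c) = c.
Proof. by elim: n => //= n IH; rewrite /horner_morph map_polyC hornerC. Qed.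

Lemma iter_hornerX n i : (i < n)%N -> iter_horner n (iter_polyX n i) = v i.
Proof.
elim: n => //= n IH lt_in; rewrite /horner_morph; case: eqP => [->|ne].
  by rewrite map_polyX hornerX.
by rewrite map_polyC hornerC; apply: IH; move: lt_in ne; clear; lia.
Qed.

End IteratedPoly.

Section PolynomialFunctions.
Variables (R : realType) (n : nat).
Implicit Types p q : 'rV[R]_n -> R.

Definition coordn (x : 'rV[R]_n) (i : nat) : R :=
  oapp (fun j : 'I_n => x ord0 j) 0 (insub i).

Lemma polyfun_iter_horner p : polyfun p ->
  exists P : iter_poly R n, forall x, p x = iter_horner (coordn x) n P.
Proof.
elim=> [c|i|p1 p2 _ [P1 e1] _ [P2 e2]|p1 p2 _ [P1 e1] _ [P2 e2]].
- by exists (iter_polyC n c) => x; rewrite iter_hornerC.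
- by exists (iter_polyX R n i) => x; rewrite iter_hornerX // /coordn valK.
- by exists (P1 + P2) => x; rewrite rmorphD e1 e2.
- by exists (P1 * P2) => x; rewrite rmorphM e1 e2.
Qed.

Lemma polyfun_noetherian (S : set ('rV[R]_n -> R)) : S `<=` @polyfun R n ->
  exists k (L : 'I_k -> 'rV[R]_n -> R),
    (forall i, S (L i)) /\ forall y, (forall i, L i y = 0) -> zero_locus S y.
Proof.
pose ev x := iter_horner (coordn x) n.
move=> Spoly; have [L [LS SL]] := @noetherian_iter_poly R n [set P | S (fun x => ev x P)].
exists (size L), (fun i x => ev x L`_i); split; first by move=> i; apply: LS; exact: mem_nth.
move=> y L0 p Sp; have [P eP] := polyfun_iter_horner (Spoly p Sp).
have ep : p = (fun x => ev x P) by apply: funext.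
have ker : ideal_closed (fun Q => ev y Q = 0).
  split=> [|a b Ea Eb|a b Eb]; first exact: rmorph0.
    by rewrite rmorphD Ea Eb addr0.
  by rewrite rmorphM Eb mulr0.
have Lker : [set` L] `<=` (fun Q => ev y Q = 0).
  move=> l /= Ll; have iL : (index l L < size L)%N by rewrite index_mem.
  by rewrite -(nth_index 0 Ll); exact: (L0 (Ordinal iL)).
by rewrite eP; rewrite ep in Sp; exact: ideal_gen_min ker Lker P (SL P Sp).
Qed.

End PolynomialFunctions.

Section TemperedLsubmx.
Variables (R : realType) (n : nat).

Lemma enorm_ge0 m (x : 'rV[R]_m) : 0 <= enorm x.
Proof. exact: sqrtr_ge0. Qed.

Lemma enorm_lsubmx (x : 'rV[R]_(n + 1)) : enorm (lsubmx x) <= enorm x.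
Proof.
rewrite /enorm; apply: ler_wsqrtr; rewrite big_split_ord /=.
under eq_bigr do rewrite mxE.
by rewrite lerDl; apply: sumr_ge0 => i _; exact: sqr_ge0.
Qed.

Lemma lsubmx_evec_lshift (j : 'I_n) : lsubmx (evec R (lshift 1 j)) = evec R j.
Proof. by apply/matrixP => a b; rewrite !mxE /= (inj_eq (@lshift_inj _ _)). Qed.

Lemma lsubmx_evec_rshift (k : 'I_1) : lsubmx (evec R (rshift n k)) = 0.
Proof. by apply/matrixP => a b; rewrite !mxE /= eq_lrshift andbF. Qed.

Lemma lsubmx_line (G : 'rV[R]_n -> R) (i : 'I_(n + 1)) :
  (exists j, forall x, (fun h => G (lsubmx (x + h *: evec R i))) =
                       (fun h => G (lsubmx x + h *: evec R j)))
  \/ forall x, (fun h => G (lsubmx (x + h *: evec R i))) = (fun=> G (lsubmx x)).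
Proof.
case: (splitP i) => [j|k] ij.
  have -> : i = lshift 1 j by apply/val_inj.
  by left; exists j => x; apply: funext => h; rewrite linearD linearZ /= lsubmx_evec_lshift.
have -> : i = rshift n k by apply/val_inj.
right => x; apply: funext => h.
by rewrite linearD linearZ /= lsubmx_evec_rshift scaler0 addr0.
Qed.

Lemma iter_partial_lsubmx (F : 'rV[R]_n -> R) (s : seq 'I_(n + 1)) :
  (exists s', iter_partial s (fun x => F (lsubmx x)) = (fun x => iter_partial s' F (lsubmx x)))
  \/ iter_partial s (fun x => F (lsubmx x)) = (fun=> 0).
Proof.
elim: s => [|i s [[s' IH]|IH]]; first by left; exists [::].
  rewrite /= IH; case: (lsubmx_line (iter_partial s' F) i) => [[j line]|line].
    by left; exists (j :: s'); apply: funext => x; rewrite /partial line.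
  by right; apply: funext => x; rewrite /partial line; exact: derive1_cst.
by right; rewrite /= IH; apply: funext => x; exact: derive1_cst.
Qed.

Lemma tempered_Rn_lsubmx (F : 'rV[R]_n -> R) : tempered_Rn F ->
  tempered_Rn (fun x : 'rV[R]_(n + 1) => F (lsubmx x)).
Proof.
move=> [smF bF]; split=> s; case: (iter_partial_lsubmx F s) => [[s' ->]|->].
- split; last first.
    move=> i x; case: (lsubmx_line (iter_partial s' F) i) => [[j ->]|->].
      exact: (smF s').2.
    exact: derivable_cst.
  move=> x e e0; have [d [d0 Hd]] := (smF s').1 (lsubmx x) e e0.
  exists d; split => // y hy; apply: Hd; rewrite -linearB.
  exact: le_lt_trans (enorm_lsubmx _) hy.
- split; last by move=> i x; exact: derivable_cst.
  by move=> x e e0; exists 1; split => // y _; rewrite subrr normr0.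
- have [C [N HC]] := bF s'; exists C, N => x.
  have C0 : 0 <= C.
    have pos : 0 < (1 + enorm (0 : 'rV[R]_n) ^+ 2) ^+ N.
      by apply: exprn_gt0; apply: ltr_wpDr; [exact: sqr_ge0 | exact: ltr01].
    by rewrite -(pmulr_lge0 _ pos); exact: le_trans (normr_ge0 _) (HC 0).
  apply: le_trans (HC _) _; apply: ler_wpM2l => //.
  apply: lerXn2r; rewrite ?nnegrE; try (apply: addr_ge0 => //; exact: sqr_ge0).
  by rewrite lerD2l; apply: lerXn2r; rewrite ?nnegrE ?enorm_ge0 //; exact: enorm_lsubmx.
- by exists 0, 0%N => x; rewrite normr0 mul0r.
Qed.

End TemperedLsubmx.

Lemma polyfunX (R : realType) n (p : 'rV[R]_n -> R) k :
  polyfun p -> polyfun (fun x => p x ^+ k).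
Proof.
move=> p_poly; elim: k => [|k IH]; first exact: polyfun_cst.
by under eq_fun do rewrite exprS; exact: polyfun_mul.
Qed.

Lemma polyfun_lsubmx (R : realType) n (p : 'rV[R]_n -> R) :
  polyfun p -> polyfun (fun z : 'rV[R]_(n + 1) => p (lsubmx z)).
Proof.
elim=> [c|i|p1 p2 _ h1 _ h2|p1 p2 _ h1 _ h2].
- exact: polyfun_cst.
- by under eq_fun do rewrite mxE; exact: polyfun_coord.
- exact: polyfun_add.
- exact: polyfun_mul.
Qed.

(* The principal open [q <> 0] of an affine chart [phi : U -> Y] is again
   affine, embedded as the closed set [{(y, z) | y \in Y, q y * z = 1}] of
   [R^(n + 1)] through [y |-> (y, 1 / q y)]. *)
Section PrincipalOpen.
Variables (R : realType) (X : Type) (opens : set (set X)) (O : set X -> set (X -> R)).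
Variables (U : set X) (n : nat) (Y : set 'rV[R]_n) (phi : X -> 'rV[R]_n).
Hypothesis chart : affine_chart opens O U Y phi.
Variable q : 'rV[R]_n -> R.
Hypothesis polyfun_q : polyfun q.

Definition inv_graph (y : 'rV[R]_n) : 'rV[R]_(n + 1) := row_mx y (const_mx (q y)^-1).

Definition last_coord (z : 'rV[R]_(n + 1)) : R := z ord0 (rshift n ord0).

Definition principal_locus : set 'rV[R]_(n + 1) :=
  [set z | Y (lsubmx z) /\ q (lsubmx z) * last_coord z = 1].

Definition principal_open : set X := [set x | U x /\ q (phi x) != 0].

Definition principal_chart (x : X) : 'rV[R]_(n + 1) := inv_graph (phi x).

Lemma lsubmx_inv_graph y : lsubmx (inv_graph y) = y.
Proof. exact: row_mxKl. Qed.

Lemma last_coord_inv_graph y : last_coord (inv_graph y) = (q y)^-1.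
Proof. by rewrite /last_coord /inv_graph row_mxEr mxE. Qed.

Lemma principal_locus_inv_graph y : Y y -> q y != 0 -> principal_locus (inv_graph y).
Proof. by move=> Yy qy; split; rewrite lsubmx_inv_graph // last_coord_inv_graph mulfV. Qed.

Lemma principal_locus_neq0 z : principal_locus z -> q (lsubmx z) != 0.
Proof.
by move=> [_ qz]; apply/eqP => q0; move: qz; rewrite q0 mul0r => /esym/eqP; rewrite oner_eq0.
Qed.

Lemma principal_locusE z : principal_locus z -> z = inv_graph (lsubmx z).
Proof.
move=> Yz; have qz := principal_locus_neq0 Yz; have [_ qzE] := Yz.
rewrite -[z in LHS]hsubmxK /inv_graph; congr row_mx.
apply/matrixP => a b; rewrite !ord1 !mxE.
by apply: (mulfI qz); rewrite -[X in _ * X = _]/(last_coord z) qzE mulfV.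
Qed.

Lemma polyfun_clear_denominator (p : 'rV[R]_(n + 1) -> R) : polyfun p ->
  exists N (p' : 'rV[R]_n -> R), polyfun p' /\
    forall y, q y != 0 -> p' y = q y ^+ N * p (inv_graph y).
Proof.
elim=> [c|i|p1 p2 _ [N1 [r1 [h1 e1]]] _ [N2 [r2 [h2 e2]]]
          |p1 p2 _ [N1 [r1 [h1 e1]]] _ [N2 [r2 [h2 e2]]]].
- by exists 0%N, (fun _ => c); split; [exact: polyfun_cst|move=> y _; rewrite mul1r].
- case: (splitP i) => [j hj|k hk].
    have -> : i = lshift 1 j by apply/val_inj.
    exists 0%N, (fun y => y ord0 j); split; first exact: polyfun_coord.
    by move=> y _; rewrite mul1r /inv_graph row_mxEl.
  have -> : i = rshift n k by apply/val_inj.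
  exists 1%N, (fun _ => 1); split; first exact: polyfun_cst.
  by move=> y hy; rewrite /inv_graph row_mxEr mxE expr1 mulfV.
- exists (N1 + N2)%N, (fun y => q y ^+ N2 * r1 y + q y ^+ N1 * r2 y); split.
    by apply: polyfun_add; apply: polyfun_mul => //; exact: polyfunX.
  by move=> y hy; rewrite e1 // e2 // exprD; ring.
- exists (N1 + N2)%N, (fun y => r1 y * r2 y); split; first exact: polyfun_mul.
  by move=> y hy; rewrite e1 // e2 // exprD; ring.
Qed.

Lemma algebraic_principal_locus : algebraic_set Y -> algebraic_set principal_locus.
Proof.
move=> [S [Spoly YE]]; pose eqn z := q (lsubmx z) * last_coord z - 1.
exists [set p | (exists2 s, S s & p = (fun z => s (lsubmx z))) \/ p = eqn]; split.
  move=> p [[s Ss ->]|->]; first exact/polyfun_lsubmx/Spoly.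
  apply: polyfun_add; last exact: polyfun_cst.
  by apply: polyfun_mul; [exact: polyfun_lsubmx | exact: polyfun_coord].
rewrite /principal_locus YE; apply/seteqP; split=> z.
  by move=> [SZ qz] p [[s Ss ->]|->]; [exact: SZ | rewrite /eqn qz subrr].
move=> SZ; split; first by move=> s Ss; apply: (SZ (fun z => s (lsubmx z))); left; exists s.
by apply/eqP; rewrite -subr_eq0; apply/eqP; apply: (SZ eqn); right.
Qed.

Lemma zopen_principal_locus (W0 : set 'rV[R]_n) : zopen_in Y W0 ->
  zopen_in principal_locus (principal_locus `&` (fun z => W0 (lsubmx z))).
Proof.
move=> [S [Spoly ->]].
exists [set p | exists2 s, S s & p = (fun z => s (lsubmx z))]; split.
  by move=> p [s Ss ->]; apply/polyfun_lsubmx/Spoly.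
apply/seteqP; split=> z.
  move=> [Yz [_ nS]]; split => // SZ; apply: nS => s Ss.
  by apply: (SZ (fun z => s (lsubmx z))); exists s.
move=> [Yz nS]; split => //; split; first exact: Yz.1.
by move=> SZ; apply: nS => p [s Ss ->]; exact: SZ.
Qed.

Lemma polyfun_vanishing_inv_graph (p : 'rV[R]_(n + 1) -> R) : polyfun p ->
  exists2 r, polyfun r & forall y, r y = 0 <-> q y = 0 \/ p (inv_graph y) = 0.
Proof.
move=> /polyfun_clear_denominator [N [p' [p'poly p'E]]].
exists (fun y => q y * p' y); first exact: polyfun_mul.
move=> y; have [->|qy0] := eqVneq (q y) 0; first by rewrite mul0r; split => // _; left.
rewrite p'E // mulrA -exprS; split; last by case=> [/eqP|->]; rewrite ?(negbTE qy0) ?mulr0.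
by move/eqP; rewrite mulf_eq0 expf_eq0 (negbTE qy0) andbF /= => /eqP; right.
Qed.

Lemma zopen_principal_locus_inv (W1 : set 'rV[R]_(n + 1)) :
  zopen_in principal_locus W1 ->
  zopen_in Y (Y `&` [set y | q y != 0] `&` (fun y => W1 (inv_graph y))).
Proof.
move=> [S [Spoly ->]].
pose S' := [set r | polyfun r /\
  exists2 p, S p & forall y, r y = 0 <-> q y = 0 \/ p (inv_graph y) = 0].
exists S'; split=> [r [] //|]; apply/seteqP; split=> y.
  move=> [[Yy qy] [_ nS]]; split => // S'y; apply: nS => p Sp.
  have [r rpoly rE] := polyfun_vanishing_inv_graph (Spoly _ Sp).
  have [/eqP|//] := (rE y).1 (S'y r (conj rpoly (ex_intro2 _ _ p Sp rE))).
  by rewrite (negbTE qy).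
move=> [Yy nS']; have [r [[_ [p Sp rE]] ry]] : exists r, S' r /\ r y <> 0.
  apply: contra_notP nS' => /forallNP nS' r S'r; apply: contrapT => ry.
  exact: nS' r (conj S'r ry).
have qy : q y != 0 by apply/eqP => qy; apply: ry; apply/rE; left.
split; first by split.
split; first exact: principal_locus_inv_graph.
by move=> /(_ p Sp) py; apply: ry; apply/rE; right.
Qed.

Lemma image_principal_chart (W : set X) : W `<=` principal_open ->
  principal_chart @` W = principal_locus `&` (fun z => (phi @` W) (lsubmx z)).
Proof.
move=> WU; have [_ [maps _] _ _ _] := chart.
apply/seteqP; split=> z.
  move=> [x Wx <-]; have [Ux qx] := WU _ Wx.
  split; first exact: principal_locus_inv_graph (maps _ Ux) qx.
  by exists x => //; rewrite /principal_chart lsubmx_inv_graph.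
move=> [Yz [x Wx xz]]; exists x => //.
by rewrite /principal_chart xz; symmetry; exact: principal_locusE.
Qed.

Lemma image_principal_open (W : set X) : W `<=` principal_open ->
  phi @` W = Y `&` [set y | q y != 0] `&` (fun y => (principal_chart @` W) (inv_graph y)).
Proof.
move=> WU; have [_ [maps _] _ _ _] := chart.
apply/seteqP; split=> y.
  move=> [x Wx <-]; have [Ux qx] := WU _ Wx; split; first by split => //; exact: maps.
  by exists x.
move=> [[hy hqy] [x Wx ex]]; exists x => //.
by have := congr1 lsubmx ex; rewrite /principal_chart !lsubmx_inv_graph.
Qed.

Lemma principal_open_sub : principal_open `<=` U.
Proof. by move=> x []. Qed.

Lemma open_principal_open : opens principal_open.
Proof.
have [_ [maps _] surj homeo _] := chart.
apply/(homeo _ principal_open_sub); exists (fun p => p = q); split; first by move=> p ->.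
apply: funext => y; apply: propext; split.
  move=> [x [hU hqx] <-]; split; first exact: maps.
  by move=> hZ; move: hqx; rewrite (hZ q erefl) eqxx.
move=> [hy hn]; have [x hU ex] := surj _ hy; exists x => //; split => //.
by rewrite ex; apply/eqP => h0; apply: hn => p ->.
Qed.

Lemma regular_principal_chart (W : set X) (g : 'rV[R]_n -> R) :
  W `<=` principal_open -> regular_on Y (phi @` W) g ->
  regular_on principal_locus (principal_chart @` W) (fun z => g (lsubmx z)).
Proof.
move=> WU rg z; rewrite (image_principal_chart WU) => -[hz [x Wx ex]].
have [W0 [[zW0 W0y W0s] [p [r [hp hr hpr]]]]] := rg _ (ex_intro2 _ _ x Wx ex).
exists (principal_locus `&` (fun z => W0 (lsubmx z))); split; first split.
- exact: zopen_principal_locus.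
- by split.
- by move=> z' [hz' /W0s h]; split.
exists (fun z => p (lsubmx z)), (fun z => r (lsubmx z)).
by split; [exact: polyfun_lsubmx | exact: polyfun_lsubmx | move=> z' [_ /hpr]].
Qed.

(* Writing [g' = p / r] near [inv_graph y], clearing the powers of [q] in
   [p (inv_graph y)] and [r (inv_graph y)] gives a quotient of polynomials in [y]. *)
Lemma regular_inv_graph (W : set X) (g' : 'rV[R]_(n + 1) -> R) :
  W `<=` principal_open -> regular_on principal_locus (principal_chart @` W) g' ->
  regular_on Y (phi @` W) (fun y => g' (inv_graph y)).
Proof.
move=> WU rg y; rewrite (image_principal_open WU) => -[[hy hqy] hey].
have [W1 [[zW1 W1y W1s] [p [r [hp hr hpr]]]]] := rg _ hey.
exists (Y `&` [set y | q y != 0] `&` (fun y => W1 (inv_graph y))); split; first split.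
- exact: zopen_principal_locus_inv.
- by split.
- by move=> y' [[hy' hqy'] /W1s h]; split.
have [Np [p' [hp' ep']]] := polyfun_clear_denominator hp.
have [Nr [r' [hr' er']]] := polyfun_clear_denominator hr.
exists (fun y => q y ^+ Nr * p' y), (fun y => q y ^+ Np * r' y); split.
- by apply: polyfun_mul => //; exact: polyfunX.
- by apply: polyfun_mul => //; exact: polyfunX.
move=> y' [[hy' hqy'] hW1]; have [hr0 ->] := hpr _ hW1.
rewrite ep' // er' //; split; first by rewrite !mulf_neq0 // expf_neq0.
by field; rewrite hr0 !expf_neq0.
Qed.

Lemma principal_open_chart :
  affine_chart opens O principal_open principal_locus principal_chart.
Proof.
have [alg [maps inj] surj homeo sheaf] := chart.
split.
- exact: algebraic_principal_locus.
- split; first by move=> x [hU hqx]; exact: principal_locus_inv_graph (maps _ hU) hqx.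
  move=> x y [hx _] [hy _] e; apply: inj => //.
  by have := congr1 lsubmx e; rewrite /principal_chart !lsubmx_inv_graph.
- move=> z hz; have [x hU ex] := surj _ hz.1; exists x.
    by split => //; rewrite ex; exact: principal_locus_neq0.
  by rewrite /principal_chart ex; symmetry; exact: principal_locusE.
- move=> W WU; rewrite (homeo _ (subset_trans WU principal_open_sub)); split.
    by move=> /zopen_principal_locus; rewrite -image_principal_chart.
  by move=> /zopen_principal_locus_inv; rewrite -image_principal_open.
- move=> W WU oW f; rewrite (sheaf _ (subset_trans WU principal_open_sub) oW f); split.
    move=> [g [rg fg]]; exists (fun z => g (lsubmx z)); split.
      exact: regular_principal_chart.
    by move=> x Wx; rewrite fg // /principal_chart lsubmx_inv_graph.
  move=> [g' [rg fg]]; exists (fun y => g' (inv_graph y)); split.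
    exact: regular_inv_graph.
  by move=> x Wx; rewrite fg.
Qed.

End PrincipalOpen.

Lemma principal_open_tempered (R : realType) (X : Type) (opens : set (set X))
    (O : set X -> set (X -> R)) (U : set X) (n : nat) (Y : set 'rV[R]_n)
    (phi : X -> 'rV[R]_n) (q F : 'rV[R]_n -> R) (t : X -> R) :
  affine_chart opens O U Y phi -> polyfun q -> tempered_Rn F ->
  (forall x, U x -> t x = F (phi x)) ->
  affine_open opens O (principal_open U phi q) /\
  tempered_affine opens O (principal_open U phi q) t.
Proof.
move=> chart polyfun_q tF tE.
have chart' := principal_open_chart chart polyfun_q.
have open' := open_principal_open chart polyfun_q.
split; first by split => //; exists (n + 1)%N, (principal_locus Y q), (principal_chart phi q).
exists (n + 1)%N, (principal_locus Y q), (principal_chart phi q); split => //.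
exists (fun z => F (lsubmx z)); split; first exact: tempered_Rn_lsubmx.
by move=> x [hU _]; rewrite tE // /principal_chart lsubmx_inv_graph.
Qed.

Section FiniteCover.
Variable T : Type.
Implicit Types (P Q : set (set T)) (W : set T).

Definition finite_cover P W :=
  exists k (B : 'I_k -> set T), (forall i, P (B i)) /\ \bigcup_i B i = W.

Lemma finite_cover_mono P Q W : P `<=` Q -> finite_cover P W -> finite_cover Q W.
Proof. by move=> PQ [k [B [PB <-]]]; exists k, B; split => // i; exact: PQ. Qed.

Lemma finite_cover0 P : finite_cover P set0.
Proof. by exists 0%N, (fun=> set0); split => [[]//|]; rewrite bigcup0. Qed.

Lemma finite_coverU P W1 W2 :
  finite_cover P W1 -> finite_cover P W2 -> finite_cover P (W1 `|` W2).
Proof.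
move=> [k1 [B1 [PB1 <-]]] [k2 [B2 [PB2 <-]]].
pose B l := match fintype.split l with inl i => B1 i | inr j => B2 j end.
exists (k1 + k2)%N, B; split; first by move=> l; rewrite /B; case: (fintype.split l).
apply/seteqP; split=> x.
  move=> [l _]; rewrite /B.
  by case: (fintype.split l) => [i|j] h; [left; exists i | right; exists j].
move=> [[i _ h]|[j _ h]].
  by exists (lshift k2 i) => //; rewrite /B (unsplitK (inl i : 'I_k1 + 'I_k2)).
by exists (rshift k1 j) => //; rewrite /B (unsplitK (inr j : 'I_k1 + 'I_k2)).
Qed.

Lemma finite_cover_bigcup P k (W : 'I_k -> set T) :
  (forall i, finite_cover P (W i)) -> finite_cover P (\bigcup_i W i).
Proof.
elim: k W => [|k IH] W PW.
  suff -> : \bigcup_i W i = set0 by exact: finite_cover0.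
  by apply/seteqP; split=> [x [[]]|].
have -> : \bigcup_i W i = W ord0 `|` \bigcup_i W (lift ord0 i).
  apply/seteqP; split=> x.
    by move=> [i _]; case: (unliftP ord0 i) => [j ->|->] h; [right; exists j | left].
  by move=> [h|[j _ h]]; [exists ord0 | exists (lift ord0 j)].
by apply: finite_coverU => //; exact: IH.
Qed.

End FiniteCover.

Lemma glue_functions (X J T : Type) (W : J -> set X) (s : J -> X -> T) (t0 : T) :
  (forall i j x, W i x -> W j x -> s i x = s j x) ->
  exists t : X -> T, forall j x, W j x -> t x = s j x.
Proof.
move=> compat.
exists (fun x => if pselect (exists j, W j x) is left e then s (projT1 (cid e)) x else t0).
move=> j x Wjx; case: pselect => [e|]; last by case; exists j.
exact: compat (projT2 (cid e)) Wjx.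
Qed.

Section TemperedSections.
Variables (R : realType) (X : Type) (opens : set (set X)) (O : set X -> set (X -> R)).

Definition tempered_affine_open (t : X -> R) : set (set X) :=
  [set B | affine_open opens O B /\ tempered_affine opens O B t].

Lemma tempered_onE V t :
  tempered_on opens O V t <-> finite_cover (tempered_affine_open t) V.
Proof.
split; first by move=> [k [B [affB _ BV tB]]]; exists k, B.
move=> [k [B [tB BV]]]; exists k, B; split => // i; first exact: (tB i).1.
  by rewrite -BV => x Bx; exists i.
exact: (tB i).2.
Qed.

Lemma tempered_affine_eq B t t' : (forall x, B x -> t x = t' x) ->
  tempered_affine opens O B t -> tempered_affine opens O B t'.
Proof.
move=> tt' [n [Y [phi [ch [F [tF tE]]]]]]; exists n, Y, phi; split => //.
by exists F; split => // x Bx; rewrite -tt' // tE.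
Qed.

Section Chart.
Variables (U : set X) (n : nat) (Y : set 'rV[R]_n) (phi : X -> 'rV[R]_n).
Hypothesis chart : affine_chart opens O U Y phi.

Lemma chart_open_nonvanishing (W : set X) (S : set ('rV[R]_n -> R)) x :
  W `<=` U -> phi @` W = Y `&` ~` zero_locus S -> U x ->
  W x <-> exists2 p, S p & p (phi x) != 0.
Proof.
have [_ [maps inj] _ _ _] := chart; move=> WU WE Ux; split.
  move=> Wx; have : (phi @` W) (phi x) by exists x.
  rewrite WE => -[_ /existsNP [p /not_implyP [Sp /eqP px]]]; by exists p.
move=> [p Sp px]; have : (phi @` W) (phi x).
  by rewrite WE; split; [exact: maps | move=> /(_ p Sp) /eqP; exact/negP].
by move=> [x' Wx' /inj <-] //; exact: WU.
Qed.

(* Finitely many of the polynomials cutting out the complement of [phi @` W]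
   already do, and [W] is the union of the corresponding principal opens. *)
Lemma tempered_open_cover (F : 'rV[R]_n -> R) t (W : set X) :
  tempered_Rn F -> (forall x, U x -> t x = F (phi x)) -> W `<=` U -> opens W ->
  finite_cover (tempered_affine_open t) W.
Proof.
move=> tF tE WU oW; have [_ _ _ homeo _] := chart.
have [S [Spoly WE]] := (homeo _ WU).1 oW.
have [k [L [SL LS]]] := polyfun_noetherian Spoly.
exists k, (fun j => principal_open U phi (L j)); split.
  by move=> j; exact: principal_open_tempered chart (Spoly _ (SL j)) tF tE.
apply/seteqP; split=> x.
  by move=> [j _ [Ux Ljx]]; apply/(chart_open_nonvanishing WU WE Ux); exists (L j).
move=> Wx; have Ux := WU x Wx.
have [p Sp /eqP px] := (chart_open_nonvanishing WU WE Ux).1 Wx.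
have [j Ljx] : exists j, L j (phi x) != 0.
  apply: contra_notP px => /forallNP L0; apply: LS Sp => j.
  by apply/eqP/negPn/negP/L0.
by exists j.
Qed.

(* Noetherianity applied to all polynomials whose principal open lies in a
   member of the cover. *)
Lemma affine_quasi_compact (C : set (set X)) (D : set X) :
  (forall B, C B -> opens (B `&` U)) -> D `<=` U -> D `<=` \bigcup_(B in C) B ->
  exists m (Bs : 'I_m -> set X), (forall l, C (Bs l)) /\ D `<=` \bigcup_l Bs l.
Proof.
move=> oC DU DC; have [_ _ _ homeo _] := chart.
pose S := [set p | polyfun p /\ exists B, C B /\ principal_open U phi p `<=` B].
have [k [L [SL LS]]] := polyfun_noetherian (fun p (Sp : S p) => Sp.1).
have [Bs CBs] := choice (fun l => (SL l).2).
exists k, Bs; split => [l|x Dx]; first by have [] := CBs l.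
have Ux := DU x Dx; have [B CB Bx] := DC x Dx.
have BUU : B `&` U `<=` U by move=> ? [].
have [S0 [S0poly BUE]] := (homeo _ BUU).1 (oC B CB).
have [p S0p px] := (chart_open_nonvanishing BUU BUE Ux).1 (conj Bx Ux).
have Sp : S p.
  split; first exact: S0poly.
  exists B; split => // y [Uy py].
  by have [] := (chart_open_nonvanishing BUU BUE Uy).2 (ex_intro2 _ _ p S0p py).
have [l Llx] : exists l, L l (phi x) != 0.
  apply: contra_notP (elimN eqP px) => /forallNP L0; apply: LS Sp => l.
  by apply/eqP/negPn/negP/L0.
by exists l => //; apply: (CBs l).2; split.
Qed.

End Chart.

Lemma tempered_on_restrict U V t : is_topology opens -> opens U -> U `<=` V ->
  tempered_on opens O V t -> tempered_on opens O U t.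
Proof.
move=> [_ _ openI _] oU UV /tempered_onE [k [Ui [tUi VE]]]; apply/tempered_onE.
have -> : U = \bigcup_i (U `&` Ui i).
  apply/seteqP; split=> [x Ux|x [i _ []] //].
  by have := UV x Ux; rewrite -VE => -[i _ Uix]; exists i.
apply: finite_cover_bigcup => i; have [[oUi _] [n [Y [phi [chart [F [tF tE]]]]]]] := tUi i.
by apply: (tempered_open_cover chart tF tE); [move=> x [] | exact: openI].
Qed.

Lemma tempered_on_local V t : algebraic_variety opens O ->
  (forall x, V x -> exists2 B, tempered_affine_open t B & B x /\ B `<=` V) ->
  tempered_on opens O V t.
Proof.
move=> [[_ _ openI _] _ [k [A [affA AE]]]] loc.
pose C := [set B | tempered_affine_open t B /\ B `<=` V].
have [W CW] : exists W : 'I_k -> set X,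
    forall i, finite_cover C (W i) /\ A i `&` V `<=` W i.
  suff /choice [W CW] : forall i, exists Wi, finite_cover C Wi /\ A i `&` V `<=` Wi.
    by exists W.
  move=> i; have [oA [n [Y [phi chart]]]] := affA i.
  have [|||m [Bs [CBs AVB]]] := @affine_quasi_compact _ _ _ _ chart C (A i `&` V).
  - by move=> B [[[oB _] _] _]; exact: openI.
  - by move=> x [].
  - by move=> x [_ Vx]; have [B tB [Bx BV]] := loc x Vx; exists B.
  by exists (\bigcup_l Bs l); split => //; exists m, Bs.
apply/tempered_onE; have -> : V = \bigcup_i W i.
  apply/seteqP; split=> x.
    move=> Vx; have : (\bigcup_i A i) x by rewrite AE.
    by move=> [i _ Aix]; exists i => //; apply: (CW i).2.
  move=> [i _]; have [m [Bs [CBs <-]]] := (CW i).1.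
  by move=> [l _]; exact: (CBs l).2.
by apply: finite_cover_bigcup => i; apply: finite_cover_mono (CW i).1 => B [].
Qed.

Lemma tempered_on_glue V (J : Type) (W : J -> set X) (s : J -> X -> R) :
  algebraic_variety opens O -> \bigcup_j W j = V ->
  (forall j, tempered_on opens O (W j) (s j)) ->
  (forall i j x, W i x -> W j x -> s i x = s j x) ->
  exists t : X -> R, tempered_on opens O V t /\ (forall j x, W j x -> t x = s j x).
Proof.
move=> var WE ts compat; have [t tE] := glue_functions 0 compat.
exists t; split => //; apply: tempered_on_local => // x; rewrite -WE => -[j _ Wjx].
have [k [B [tB BE]]] := (tempered_onE _ _).1 (ts j).
have [l _ Blx] : (\bigcup_i B i) x by rewrite BE.
have BW : B l `<=` W j by rewrite -BE => y Bly; exists l.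
exists (B l); last by split => // y /BW Wjy; exists j.
split; first exact: (tB l).1.
by apply: tempered_affine_eq (tB l).2 => y /BW Wjy; rewrite (tE j).
Qed.

End TemperedSections.

Unset Implicit Arguments.

Theorem proposition5p11 (R : realType) (X : Type) (opens : set (set X))
    (O : set X -> set (X -> R)) :
  algebraic_variety opens O ->
  (* presheaf: restriction maps T(V) -> T(U) for Zariski opens U ⊆ V *)
  (forall (U V : set X) (t : X -> R), opens U -> opens V -> U `<=` V ->
     tempered_on opens O V t -> tempered_on opens O U t) /\
  (* gluing: compatible sections on an open cover glue to a section *)
  (forall (V : set X) (J : Type) (W : J -> set X),
     opens V -> (forall j, opens (W j)) -> \bigcup_j W j = V ->
     forall s : J -> X -> R,
       (forall j, tempered_on opens O (W j) (s j)) ->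
       (forall i j x, W i x -> W j x -> s i x = s j x) ->
       exists t : X -> R, tempered_on opens O V t /\
         (forall j x, W j x -> t x = s j x)).
Proof.
move=> var; split.
  move=> U V t oU _ UV; apply: tempered_on_restrict oU UV.
  by case: var.
by move=> V J W _ _ WE s ts compat; exact: tempered_on_glue var WE ts compat.
Qed.
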